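(* Let $(M,c,\nabla)$ be a non-closed Lorentzian Weyl manifold of dimension $n+2\geq4$ with recurrent curvature tensor $R$, and let $U$ be a coordinate neighborhood with coordinates $v,x^1,\dots,x^n,u$ on which $c$ is represented by $g=2\,dv\,du+\sum_{i=1}^{n-1}(dx^i)^2+e^{-2F}(dx^n)^2+a(u)\sum_{i=1}^{n-1}(x^i)^2(du)^2$ with corresponding 1-form $\omega=\partial_uF\,du$, where $F=F(x^n,u)$ satisfies $\partial_u^2F-(\partial_uF)^2=-a(u)$ and $\partial_{x^n}\partial_uF$ is nowhere vanishing. Then the conformal class of $g$ on $U$ contains a metric $h$ satisfying $$\nabla h=-2\omega_h\otimes h,\qquad \nabla R=-3\omega_h\otimes R,$$ and such a metric is unique up to homothety.
   Context: A Lorentzian Weyl manifold is a triple $(M,c,\nabla)$ with $M$ a connected manifold, $c$ a conformal class of Lorentzian metrics, $\nabla$ a torsion-free connection with $\nabla g=-2\omega_g\otimes g$ for each $g\in c$ and some 1-form $\omega_g$. It is closed if $d\omega_g=0$. $R$ is recurrent if $\nabla R=\theta\otimes R$ for some 1-form $\theta$. Homothetic metrics differ by a positive constant factor. *)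

(* local coordinate formalization on an open subset
   of R^(n+2) (the chart image of the coordinate neighbourhood U). *)
From HB Require Import structures.
From mathcomp Require Import all_boot all_order all_algebra.
From mathcomp Require Import all_classical all_reals all_analysis.
Set Implicit Arguments. Unset Strict Implicit. Unset Printing Implicit Defensive.
Import Order.TTheory GRing.Theory Num.Theory.
Import numFieldNormedType.Exports.
Local Open Scope classical_set_scope.
Local Open Scope ring_scope.

Section WeylDefs.
Variables (R : realType) (N : nat).
(* points of R^N are row vectors; coordinate k of p is p 0 k *)
Notation V := 'rV[R]_N.

Definition ebasis (i : 'I_N) : V := delta_mx 0 i.

Definition partial (i : 'I_N) (f : V -> R) : V -> R :=
  fun p => 'D_(ebasis i) f p.

Definition iter_partial (s : seq 'I_N) (f : V -> R) : V -> R :=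
  foldr partial f s.

Definition smooth_on (U : set V) (f : V -> R) : Prop :=
  forall (s : seq 'I_N) (p : V), U p -> differentiable (iter_partial s f) p.

(* Connection coefficients: Gam l i j = Gamma^l_{ij},
   i.e. nabla_{d_i} d_j = sum_l Gamma^l_{ij} d_l. *)

(* (nabla h)_{k i j} = (nabla_{d_k} h)(d_i, d_j) *)
Definition nabla2 (Gam : 'I_N -> 'I_N -> 'I_N -> V -> R)
  (h : 'I_N -> 'I_N -> V -> R) (k i j : 'I_N) (p : V) : R :=
  partial k (h i j) p
  - \sum_(l < N) (Gam l k i p * h l j p + Gam l k j p * h i l p).

(* curvature R(d_i,d_j)d_k = sum_l Curv l i j k d_l,
   R(X,Y) = [nabla_X, nabla_Y] - nabla_[X,Y] *)
Definition Curv (Gam : 'I_N -> 'I_N -> 'I_N -> V -> R) (l i j k : 'I_N)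
  (p : V) : R :=
  partial i (Gam l j k) p - partial j (Gam l i k) p
  + \sum_(m < N) (Gam l i m p * Gam m j k p - Gam l j m p * Gam m i k p).

(* (nabla R) components: (nabla_{d_m} R)^l_{ijk} *)
Definition nablaCurv (Gam : 'I_N -> 'I_N -> 'I_N -> V -> R)
  (m l i j k : 'I_N) (p : V) : R :=
  partial m (Curv Gam l i j k) p
  + \sum_(q < N) (Gam l m q p * Curv Gam q i j k p
                  - Gam q m i p * Curv Gam l q j k p
                  - Gam q m j p * Curv Gam l i q k p
                  - Gam q m k p * Curv Gam l i j q p).

Definition weyl_on (U : set V) (Gam : 'I_N -> 'I_N -> 'I_N -> V -> R)
  (g : 'I_N -> 'I_N -> V -> R) (om : 'I_N -> V -> R) : Prop :=
  (forall p, U p -> forall l i j, Gam l i j p = Gam l j i p) /\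
  (forall p, U p -> forall k i j, nabla2 Gam g k i j p = - 2 * om k p * g i j p).

Definition recurrent_on (U : set V) (Gam : 'I_N -> 'I_N -> 'I_N -> V -> R)
  : Prop :=
  exists theta : 'I_N -> V -> R, forall p, U p -> forall m l i j k,
    nablaCurv Gam m l i j k p = theta m p * Curv Gam l i j k p.

Definition conf (phi : V -> R) (g : 'I_N -> 'I_N -> V -> R) :
  'I_N -> 'I_N -> V -> R := fun i j p => phi p * g i j p.

Definition special_conf (U : set V) (Gam : 'I_N -> 'I_N -> 'I_N -> V -> R)
  (g : 'I_N -> 'I_N -> V -> R) (phi : V -> R) : Prop :=
  exists omh : 'I_N -> V -> R,
    (forall p, U p -> forall k i j,
        nabla2 Gam (conf phi g) k i j p = - 2 * omh k p * conf phi g i j p) /\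
    (forall p, U p -> forall m l i j k,
        nablaCurv Gam m l i j k p = - 3 * omh m p * Curv Gam l i j k p).
End WeylDefs.

(* Coordinates (v, x^1, ..., x^n, u) on R^(n+2): index 0 is v,
   index i (1 <= i <= n) is x^i, index n+1 is u. *)
Definition v_idx (n : nat) : 'I_(n.+2) := ord0.
Definition u_idx (n : nat) : 'I_(n.+2) := ord_max.
Definition xn_idx (n : nat) : 'I_(n.+2) := inord n.

Section Model.
Variables (R : realType) (n : nat).
Notation V := 'rV[R]_(n.+2).

Definition Fhat (F : R -> R -> R) : V -> R :=
  fun p => F (p 0 (xn_idx n)) (p 0 (u_idx n)).

(* g = 2 dv du + sum_{i=1}^{n-1} (dx^i)^2 + e^{-2F} (dx^n)^2
       + a(u) sum_{i=1}^{n-1} (x^i)^2 (du)^2 *)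
Definition gmodel (F : R -> R -> R) (a : R -> R) :
  'I_(n.+2) -> 'I_(n.+2) -> V -> R :=
  fun i j p =>
    if ((i == v_idx n) && (j == u_idx n)) || ((i == u_idx n) && (j == v_idx n))
    then 1
    else if i != j then 0
    else if (0 < i < n)%N then 1
    else if (i == n :> nat) then expR (- 2 * Fhat F p)
    else if i == u_idx n then
      a (p 0 (u_idx n)) * \sum_(k < n.+2 | (0 < k < n)%N) (p 0 k) ^+ 2
    else 0.

Definition omodel (F : R -> R -> R) : 'I_(n.+2) -> V -> R :=
  fun k p => if k == u_idx n then partial (u_idx n) (Fhat F) p else 0.
End Model.

From HB Require Import structures.
From mathcomp Require Import all_boot all_order all_algebra.
From mathcomp Require Import all_classical all_reals all_analysis.
From mathcomp Require Import ring zify.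
Import Order.TTheory GRing.Theory Num.Theory.
Import numFieldNormedType.Exports.
Set Implicit Arguments. Unset Strict Implicit. Unset Printing Implicit Defensive.
Local Open Scope classical_set_scope.
Local Open Scope ring_scope.

(* The curvature of the model has the nowhere vanishing component
   R^1_{n u 1} = Q := d_{x^n} d_u F.  The Christoffel symbols of the Weyl connection,
   computed with the Koszul formula, give
     (nabla_m R)^1_{n u 1} = d_m Q + [m = x^n] (d_{x^n} F) Q - 2 [m = u] (d_u F) Q,
   so the recurrence form is forced to be theta = d ln|Q| + d_{x^n}F dx^n - 2 d_u F du.
   For h = phi g the Weyl form is omega_h = omega - d phi / (2 phi), and theta = -3 omega_h
   holds for phi = e^{2F/3} |Q|^{2/3}; recurrence then gives nabla R = -3 omega_h (x) R in
   every component.  Conversely, if psi g has both properties with some form omega', the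
   first one forces omega' = omega - d psi / (2 psi) and the second one, read on the
   component Q, forces omega' = omega_h; hence d(psi/phi) = 0 and psi/phi is constant on
   the connected set U. *)

Section NearDifferentiable.
Variables (R : realType) (V W : normedModType R).

Lemma differentiable_near0 (h : V -> W) (a : V) :
  (\forall x \near a, h x = 0) -> differentiable h a.
Proof.
move=> h0.
have ha : h a = 0 := nbhs_singleton h0.
have dh : h \o shift a = cst (h a) + \0 +o_ 0 id.
  apply/eqaddoP => eps eps0.
  have hs : \forall y \near (0 : V), h (y + a) = 0.
    by move: h0; rewrite (near_shift 0) /= subr0.
  near=> y.
  rewrite /= ha addr0 subr0.
  have -> : (h \o +%R^~ a) y = 0 by rewrite /=; near: y.
  by rewrite normr0 mulr_ge0 // ltW.
have d0 : 'd h a = \0 :> (V -> W).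
  by apply: diff_unique => //; exact: cst_continuous.
apply/diff_locallyP; rewrite d0; split => //; exact: cst_continuous.
Unshelve. all: by end_near. Qed.

Lemma near_eq_differentiable (f g : V -> W) (a : V) :
  (\forall x \near a, f x = g x) -> differentiable f a -> differentiable g a.
Proof.
move=> fg df.
have d0 : differentiable (g - f) a.
  by apply: differentiable_near0; near=> x; rewrite !fctE (near fg x) // subrr.
have -> : g = f + (g - f) by apply/funext => x; rewrite !fctE addrC subrK.
exact: differentiableD.
Unshelve. all: by end_near. Qed.

End NearDifferentiable.

Section PartialDerivatives.
Variables (R : realType) (N : nat).
Notation V := 'rV[R]_N.
Implicit Types (f g : V -> R) (p : V) (j : 'I_N).

Lemma partial_comp (h : R -> R) f p j :
  differentiable f p -> derivable h (f p) 1 ->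
  partial j (h \o f) p = 'D_1 h (f p) * partial j f p.
Proof.
move=> df dh; have dh' : differentiable h (f p) by apply/derivable1_diffP.
rewrite /partial deriveE; last exact: differentiable_comp.
by rewrite diff_comp // /= (deriv1E dh) /= (deriveE _ df) derive1E mulrC.
Qed.

Lemma partial_expR f p j :
  differentiable f p -> partial j (expR \o f) p = expR (f p) * partial j f p.
Proof.
move=> df; rewrite partial_comp //; congr (_ * _).
exact: (congr1 (fun e => e (f p)) (@derive_expR R)).
Qed.

Lemma partial_ln f p j : differentiable f p -> 0 < f p ->
  partial j (@ln R \o f) p = (f p)^-1 * partial j f p.
Proof.
move=> df fp; have [dln Dln] := is_derive1_ln fp.
by rewrite partial_comp // Dln.
Qed.

Lemma partialV f p j : differentiable f p -> f p != 0 ->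
  partial j (fun q => (f q)^-1) p = - (f p ^- 2) * partial j f p.
Proof. by move=> df fp; rewrite /partial deriveV //; exact: diff_derivable. Qed.

Lemma partialD f g p j : differentiable f p -> differentiable g p ->
  partial j (f + g) p = partial j f p + partial j g p.
Proof. by move=> df dg; rewrite /partial deriveD //; exact: diff_derivable. Qed.

Lemma partialM f g p j : differentiable f p -> differentiable g p ->
  partial j (f * g) p = f p * partial j g p + g p * partial j f p.
Proof. by move=> df dg; rewrite /partial deriveM //; exact: diff_derivable. Qed.

Lemma partialZ (c : R) f p j : differentiable f p ->
  partial j (c *: f) p = c * partial j f p.
Proof. by move=> df; rewrite /partial deriveZ //; exact: diff_derivable. Qed.

Lemma partial_cst (c : R) p j : partial j (cst c) p = 0.
Proof. exact: derive_cst. Qed.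

Lemma partial_eq0 f p j :
  (forall h : R, f (h *: ebasis R j + p) = f p) -> partial j f p = 0.
Proof.
move=> fj; rewrite /partial /derive.
rewrite (_ : (fun h : R => _) = cst 0); first exact: lim_cst.
by apply/funext => h /=; rewrite fj subrr scaler0.
Qed.

Lemma derive_partial_eq0 f p (w : V) : differentiable f p ->
  (forall j, partial j f p = 0) -> 'D_w f p = 0.
Proof.
move=> df f0; rewrite deriveE // [w]row_sum_delta linear_sum big1 // => j _.
rewrite linearZ /= -deriveE //.
by have := f0 j; rewrite /partial /ebasis => ->; rewrite scaler0.
Qed.

Lemma derive_along_line f p (w : V) (t : R) :
  let g := fun s : R => f (p + s *: w) in
  'D_1 g t = 'D_w f (p + t *: w) /\
  (derivable f (p + t *: w) w -> derivable g t 1).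
Proof.
move=> g.
have E : (fun h : R => h^-1 *: ((g \o shift t) (h *: 1) - g t)) =
         (fun h : R => h^-1 *: ((f \o shift (p + t *: w)) (h *: w) - f (p + t *: w))).
  apply/funext => h; rewrite /g /=.
  by congr (_ *: (f _ - _)); rewrite [h *: 1]mulr1 scalerDl addrCA addrC.
by split; rewrite /derive /derivable E.
Qed.

Lemma partial_ratio_eq0 f g p j :
  differentiable f p -> differentiable g p -> f p != 0 -> g p != 0 ->
  partial j f p / f p = partial j g p / g p ->
  partial j (fun q => f q / g q) p = 0.
Proof.
move=> df dg f0 g0 E.
rewrite (_ : (fun q => f q / g q) = f * (fun q => (g q)^-1)) //.
rewrite partialM //; last exact: differentiableV.
rewrite partialV // (_ : partial j f p = f p * (partial j g p / g p)).
  by field.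
by rewrite -E; field.
Qed.

End PartialDerivatives.

Section OpenSet.
Variables (R : realType) (N : nat) (U : set 'rV[R]_N).
Hypothesis openU : open U.
Notation V := 'rV[R]_N.
Implicit Types (f g : V -> R) (p : V) (j : 'I_N).

Lemma near_eq_on f g p : (forall q, U q -> f q = g q) -> U p ->
  \forall q \near p, f q = g q.
Proof.
move=> fg Up; have : \forall q \near p, U q by apply: open_nbhs_nbhs.
by apply: filterS => q; exact: fg.
Qed.

Lemma differentiable_eq_on f g p : (forall q, U q -> f q = g q) -> U p ->
  differentiable f p -> differentiable g p.
Proof. by move=> fg Up; apply: near_eq_differentiable; exact: near_eq_on. Qed.

Lemma partial_eq_on f g j p : (forall q, U q -> f q = g q) -> U p ->
  partial j f p = partial j g p.
Proof. by move=> fg Up; apply: near_eq_derive; exact: near_eq_on. Qed.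

Lemma partial_eq0_on f j p : (forall q, U q -> f q = 0) -> U p -> partial j f p = 0.
Proof. by move=> f0 Up; rewrite (@partial_eq_on _ (cst 0)) ?partial_cst. Qed.

Lemma iter_partial_eq_on s f g : (forall q, U q -> f q = g q) ->
  forall p, U p -> iter_partial s f p = iter_partial s g p.
Proof. by elim: s => [|j s IH] //= fg p; apply: partial_eq_on; exact: IH. Qed.

Lemma iter_partial_rcons s j f :
  iter_partial (rcons s j) f = iter_partial s (partial j f).
Proof. by rewrite /iter_partial foldr_rcons. Qed.

Definition differentiable_upto k f := forall s, (size s <= k)%N ->
  forall p, U p -> differentiable (iter_partial s f) p.

Lemma smooth_onP f : smooth_on U f <-> forall k, differentiable_upto k f.
Proof. by split=> [sf k s _|sf s]; [exact: sf|exact: (sf (size s))]. Qed.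

Lemma differentiable_upto_eq_on k f g : (forall q, U q -> f q = g q) ->
  differentiable_upto k f -> differentiable_upto k g.
Proof.
move=> fg df s ks p Up.
apply: (differentiable_eq_on (iter_partial_eq_on s fg)) => //; exact: df.
Qed.

Lemma differentiable_upto_diff k f p :
  differentiable_upto k f -> U p -> differentiable f p.
Proof. by move=> df; exact: (df [::]). Qed.

Lemma differentiable_uptoW k f :
  differentiable_upto k.+1 f -> differentiable_upto k f.
Proof. by move=> df s ks; apply: df; exact: leqW. Qed.

Lemma differentiable_upto_partial k f j :
  differentiable_upto k.+1 f -> differentiable_upto k (partial j f).
Proof.
by move=> df s ks p Up; rewrite -iter_partial_rcons; apply: df; rewrite ?size_rcons.
Qed.

Lemma differentiable_uptoS k f : (forall p, U p -> differentiable f p) ->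
  (forall j, differentiable_upto k (partial j f)) -> differentiable_upto k.+1 f.
Proof.
move=> d0 dj; case/lastP => [|s j] ks p Up; first exact: d0.
by rewrite iter_partial_rcons; apply: dj; rewrite // -ltnS -(size_rcons s j).
Qed.

Lemma differentiable_upto0 f : (forall p, U p -> differentiable f p) ->
  differentiable_upto 0 f.
Proof. by move=> df s; rewrite leqn0 => /nilP ->. Qed.

Lemma differentiable_upto_cst k (c : R) : differentiable_upto k (cst c).
Proof.
elim: k c => [|k IH] c; first exact: differentiable_upto0.
apply: differentiable_uptoS => // j.
by rewrite (_ : partial j (cst c) = cst 0) //; apply/funext => p; exact: partial_cst.
Qed.

Lemma differentiable_uptoD k f g : differentiable_upto k f ->
  differentiable_upto k g -> differentiable_upto k (f + g).
Proof.
elim: k f g => [|k IH] f g df dg.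
  by apply: differentiable_upto0 => p Up; apply: differentiableD;
    [exact: differentiable_upto_diff df Up|exact: differentiable_upto_diff dg Up].
apply: differentiable_uptoS => [p Up|j].
  by apply: differentiableD;
    [exact: differentiable_upto_diff df Up|exact: differentiable_upto_diff dg Up].
apply: (@differentiable_upto_eq_on _ (partial j f + partial j g)).
  by move=> p Up; rewrite partialD //;
    [exact: differentiable_upto_diff df Up|exact: differentiable_upto_diff dg Up].
by apply: IH; exact: differentiable_upto_partial.
Qed.

Lemma differentiable_uptoM k f g : differentiable_upto k f ->
  differentiable_upto k g -> differentiable_upto k (f * g).
Proof.
elim: k f g => [|k IH] f g df dg.
  by apply: differentiable_upto0 => p Up; apply: differentiableM;
    [exact: differentiable_upto_diff df Up|exact: differentiable_upto_diff dg Up].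
apply: differentiable_uptoS => [p Up|j].
  by apply: differentiableM;
    [exact: differentiable_upto_diff df Up|exact: differentiable_upto_diff dg Up].
apply: (@differentiable_upto_eq_on _ (f * partial j g + g * partial j f)).
  by move=> p Up; rewrite partialM //;
    [exact: differentiable_upto_diff df Up|exact: differentiable_upto_diff dg Up].
by apply: differentiable_uptoD; apply: IH;
  solve [exact: differentiable_uptoW | exact: differentiable_upto_partial].
Qed.

Lemma differentiable_uptoZ k (c : R) f :
  differentiable_upto k f -> differentiable_upto k (c *: f).
Proof.
move=> df; apply: (@differentiable_upto_eq_on _ (cst c * f)) => [q _ //|].
exact: differentiable_uptoM (differentiable_upto_cst c) df.
Qed.

Lemma differentiable_upto_expR k f :
  differentiable_upto k f -> differentiable_upto k (expR \o f).
Proof.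
have dexp g p : differentiable g p -> differentiable (expR \o g) p.
  by move=> dgp; apply: differentiable_comp => //; apply/derivable1_diffP.
elim: k f => [|k IH] f df.
  by apply: differentiable_upto0 => p Up; apply: dexp;
    exact: differentiable_upto_diff df Up.
apply: differentiable_uptoS => [p Up|j].
  by apply: dexp; exact: differentiable_upto_diff df Up.
apply: (@differentiable_upto_eq_on _ ((expR \o f) * partial j f)).
  by move=> p Up; rewrite partial_expR //; exact: differentiable_upto_diff df Up.
apply: differentiable_uptoM; last exact: differentiable_upto_partial.
by apply: IH; exact: differentiable_uptoW.
Qed.

Lemma differentiable_uptoV k f : (forall p, U p -> f p != 0) ->
  differentiable_upto k f -> differentiable_upto k (fun q => (f q)^-1).
Proof.
move=> f0; elim: k => [|k IH] df.
  apply: differentiable_upto0 => p Up; apply: differentiableV; last exact: f0.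
  exact: differentiable_upto_diff df Up.
apply: differentiable_uptoS => [p Up|j].
  by apply: differentiableV; [exact: differentiable_upto_diff df Up|exact: f0].
apply: (@differentiable_upto_eq_on _
  (cst (-1) * ((fun q => (f q)^-1) * (fun q => (f q)^-1)) * partial j f)).
  move=> p Up; rewrite partialV ?f0 //; last exact: differentiable_upto_diff df Up.
  by rewrite !fctE mulN1r -invfM -expr2.
have dV : differentiable_upto k (fun q => (f q)^-1).
  by apply: IH; exact: differentiable_uptoW.
apply: differentiable_uptoM; last exact: differentiable_upto_partial.
by apply: differentiable_uptoM; [exact: differentiable_upto_cst|exact: differentiable_uptoM].
Qed.

Lemma differentiable_upto_ln k f : (forall p, U p -> 0 < f p) ->
  differentiable_upto k f -> differentiable_upto k (@ln R \o f).
Proof.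
have dln p : U p -> 0 < f p -> differentiable f p -> differentiable (@ln R \o f) p.
  move=> Up fp dfp; apply: differentiable_comp => //.
  by apply/derivable1_diffP; apply: ex_derive; exact: is_derive1_ln.
case: k => [|k] f0 df.
  by apply: differentiable_upto0 => p Up; apply: dln (f0 p Up) _;
    [|exact: differentiable_upto_diff df Up].
apply: differentiable_uptoS => [p Up|j].
  by apply: dln (f0 p Up) _; [|exact: differentiable_upto_diff df Up].
apply: (@differentiable_upto_eq_on _ ((fun q => (f q)^-1) * partial j f)).
  by move=> p Up; rewrite partial_ln ?f0 //; exact: differentiable_upto_diff df Up.
apply: differentiable_uptoM; last exact: differentiable_upto_partial.
apply: differentiable_uptoV; last exact: differentiable_uptoW.
by move=> p Up; rewrite gt_eqF ?f0.
Qed.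

Lemma partial0_near_cst f p : U p ->
  (forall q, U q -> differentiable f q) ->
  (forall j q, U q -> partial j f q = 0) ->
  \forall q \near p, f q = f p.
Proof.
move=> Up df f0.
have /nbhs_ballP [r r0 rU] : nbhs p U by apply: open_nbhs_nbhs.
apply/nbhs_ballP; exists r => // q pq.
pose w := q - p; pose g s := f (p + s *: w).
have segU (s : R) : 0 <= s <= 1 -> U (p + s *: w).
  move=> /andP [s0 s1]; apply: rU.
  rewrite -ball_normE /= opprD addrA subrr add0r normrN normrZ ger0_norm //.
  apply: (le_lt_trans (y := `|w|)); first by rewrite -[leRHS]mul1r ler_wpM2r.
  by move: pq; rewrite -ball_normE /= /w -normrN opprB.
have g'0 (s : R) : 0 <= s <= 1 -> is_derive s 1 g 0.
  move=> s01; have [D1 gd] := derive_along_line f p w s.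
  have dfs := df _ (segU s s01).
  apply: DeriveDef; first by apply: gd; exact: diff_derivable.
  by rewrite D1; apply: derive_partial_eq0 => // j; apply: f0; exact: segU.
have [|| s _] := @MVT _ g (fun _ => 0) 0 1 ltr01.
- by move=> s; rewrite in_itv /= => /andP [s0 s1]; apply: g'0; rewrite !ltW.
- apply: continuous_in_subspaceT => s; rewrite inE /= in_itv /= => s01.
  have [/derivable1_diffP + _] := g'0 s s01.
  exact: differentiable_continuous.
by rewrite mul0r => /eqP; rewrite subr_eq0 /g scale1r scale0r addr0 /w addrC subrK => /eqP.
Qed.

Lemma partial0_is_cst f : connected U ->
  (forall q, U q -> differentiable f q) ->
  (forall j q, U q -> partial j f q = 0) ->
  forall p q, U p -> U q -> f q = f p.
Proof.
move=> cU df f0 p q Up Uq.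
have near_cst z : U z -> \forall w \near z, f w = f z.
  by move=> Uz; exact: partial0_near_cst.
suff BU : [set z | U z /\ f z = f p] = U by rewrite -BU in Uq; case: Uq.
(* {f = f p} is open and closed in U since f is locally constant there. *)
apply: cU; first by exists p.
- exists (interior [set w | f w = f p]); first exact: open_interior.
  apply/seteqP; split => z.
    by move=> [Uz fz]; split => //; rewrite /interior /= -fz; exact: near_cst.
  by move=> [Uz /nbhs_singleton fz].
- exists (~` interior [set w | f w != f p]).
    by apply: open_closedC; exact: open_interior.
  apply/seteqP; split => z.
    by move=> [Uz fz]; split => //= /nbhs_singleton /=; rewrite fz eqxx.
  move=> [Uz nz]; split => //; have [//|fzp] := eqVneq (f z) (f p).
  exfalso; apply: nz; rewrite /interior /=.
  by have := near_cst z Uz; apply: filterS => w /= ->.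
Qed.

End OpenSet.

Section WeylStructure.
Variables (R : realType) (N : nat).
Notation V := 'rV[R]_N.
Variables (Gam : 'I_N -> 'I_N -> 'I_N -> V -> R) (g : 'I_N -> 'I_N -> V -> R).
Variables (om : 'I_N -> V -> R).

Definition koszul_form (k i j : 'I_N) (p : V) : R :=
  ((partial k (g i j) p + 2 * om k p * g i j p)
   + (partial i (g k j) p + 2 * om i p * g k j p)
   - (partial j (g k i) p + 2 * om j p * g k i p)) / 2.

Lemma weyl_koszul p :
  (forall l i j, Gam l i j p = Gam l j i p) ->
  (forall i j, g i j p = g j i p) ->
  (forall k i j, nabla2 Gam g k i j p = - 2 * om k p * g i j p) ->
  forall k i j, \sum_(l < N) Gam l k i p * g l j p = koszul_form k i j p.
Proof.
move=> symGam symg weylg k i j.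
pose lower j0 k0 i0 := \sum_(l < N) Gam l k0 i0 p * g l j0 p.
have dg k0 i0 j0 : partial k0 (g i0 j0) p + 2 * om k0 p * g i0 j0 p =
    lower j0 k0 i0 + lower i0 k0 j0.
  have := weylg k0 i0 j0; rewrite /nabla2 big_split /= => /eqP.
  rewrite subr_eq => /eqP ->; rewrite /lower.
  under [X in _ = _ + X]eq_bigr do rewrite symg.
  ring.
rewrite /koszul_form !dg /lower.
under [\sum_(l < N) Gam l i k p * _]eq_bigr do rewrite symGam.
under [\sum_(l < N) Gam l j k p * _]eq_bigr do rewrite symGam.
under [\sum_(l < N) Gam l j i p * _]eq_bigr do rewrite symGam.
by field.
Qed.

Definition omega_conf (phi : V -> R) (k : 'I_N) (p : V) : R :=
  om k p - partial k phi p / (2 * phi p).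

Lemma nabla2_conf (phi : V -> R) p k i j :
  (forall k i j, nabla2 Gam g k i j p = - 2 * om k p * g i j p) ->
  differentiable phi p -> differentiable (g i j) p -> phi p != 0 ->
  nabla2 Gam (conf phi g) k i j p =
  - 2 * omega_conf phi k p * conf phi g i j p.
Proof.
move=> weylg dphi dg phi0; rewrite /nabla2 /conf /omega_conf.
rewrite (_ : (fun q => phi q * g i j q) = phi * g i j) // partialM //.
set S := \sum_(l < N) (Gam l k i p * g l j p + Gam l k j p * g i l p).
have -> : \sum_(l < N) (Gam l k i p * (phi p * g l j p) +
    Gam l k j p * (phi p * g i l p)) = phi p * S.
  by rewrite mulr_sumr; apply: eq_bigr => l _; ring.
have := weylg k i j; rewrite /nabla2 -/S => E.
rewrite -(subKr (partial k (g i j) p) S) E.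
by field.
Qed.

End WeylStructure.

Lemma sum_mul_ifeq (R : pzSemiRingType) (N : nat) (f : 'I_N -> R) (c : 'I_N) (x : R) :
  \sum_(l < N) f l * (if l == c then x else 0) = f c * x.
Proof.
rewrite (bigD1 c) //= eqxx big1 ?addr0 // => l /negbTE ->; exact: mulr0.
Qed.

Section Model.
Variables (R : realType) (n : nat) (F : R -> R -> R) (a : R -> R).
Variables (U : set 'rV[R]_(n.+2)).
Variables (Gam : 'I_(n.+2) -> 'I_(n.+2) -> 'I_(n.+2) -> 'rV[R]_(n.+2) -> R).

Notation V := 'rV[R]_(n.+2).
Notation I := 'I_(n.+2).
Notation v := (v_idx n).
Notation u := (u_idx n).
Notation xn := (xn_idx n).
Notation Fh := (@Fhat R n F).
Notation Fu := (partial u Fh).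
Notation Q := (partial xn Fu).
Notation g := (@gmodel R n F a).

Hypotheses (n_ge2 : (2 <= n)%N) (openU : open U).
Hypothesis smoothF : smooth_on U Fh.
Hypothesis smootha : smooth_on U (fun p => a (p 0 u)).
Hypothesis weylG : weyl_on U Gam g (omodel F).
Hypothesis recG : recurrent_on U Gam.
Hypothesis Q_neq0 : forall p, U p -> Q p != 0.

Implicit Types (i j k l m b : I) (p : V).

Definition x1 : I := inord 1.

Definition Hmodel (p : V) : R :=
  a (p 0 u) * \sum_(k < n.+2 | (0 < k < n)%N) (p 0 k) ^+ 2.

Lemma val_xn : nat_of_ord xn = n. Proof. by rewrite inordK. Qed.
Lemma val_x1 : nat_of_ord x1 = 1%N. Proof. by rewrite inordK //; lia. Qed.
Lemma ord_eqE (i j : I) : (i == j) = (nat_of_ord i == nat_of_ord j). Proof. by []. Qed.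

Ltac index_cases :=
  repeat (let H := fresh in case: ifP => H; move: H);
  rewrite ?ord_eqE ?val_xn ?val_x1 /=; move=> *; try (exfalso; lia); try done.

Lemma index_kinds (b : I) : [\/ b = v, b = u, b = xn | (0 < b < n)%N].
Proof.
have [->|bv] := eqVneq b v; first by constructor 1.
have [->|bu] := eqVneq b u; first by constructor 2.
have [->|bxn] := eqVneq b xn; first by constructor 3.
by constructor 4; move: bv bu bxn; rewrite !ord_eqE val_xn /=; have := ltn_ord b; lia.
Qed.

Lemma x1_flat : (0 < x1 < n)%N. Proof. by rewrite val_x1; lia. Qed.

Lemma index_eqF :
  ((v == u) = false) * ((u == v) = false) * ((v == xn) = false) * ((xn == v) = false)
  * ((u == xn) = false) * ((xn == u) = false).
Proof. by do !split; apply/negbTE; rewrite ord_eqE ?val_xn /=; lia. Qed.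

Lemma flat_eqF (b : I) : (0 < b < n)%N ->
  ((b == v) = false) * ((v == b) = false) * ((b == u) = false) * ((u == b) = false)
  * ((b == xn) = false) * ((xn == b) = false).
Proof. by move=> bf; do !split; apply/negbTE; rewrite ord_eqE ?val_xn /=; lia. Qed.

Lemma x1_eqF : ((x1 == v) = false) * ((v == x1) = false) * ((x1 == u) = false)
  * ((u == x1) = false) * ((x1 == xn) = false) * ((xn == x1) = false).
Proof. exact: flat_eqF x1_flat. Qed.

Lemma gmodel_sym i j p : g i j p = g j i p.
Proof. rewrite /gmodel; index_cases. Qed.

Lemma gmodel_col_flat j : (0 < j < n)%N -> forall p l, g l j p = if l == j then 1 else 0.
Proof. move=> jf p l; rewrite /gmodel; index_cases. Qed.

Lemma gmodel_col_x1 p l : g l x1 p = if l == x1 then 1 else 0.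
Proof. exact: (gmodel_col_flat x1_flat p l). Qed.

Lemma gmodel_col_v p l : g l v p = if l == u then 1 else 0.
Proof. rewrite /gmodel; index_cases. Qed.

Lemma gmodel_col_xn p l : g l xn p = if l == xn then expR (-2 * Fh p) else 0.
Proof. rewrite /gmodel; index_cases. Qed.

Lemma gmodel_col_u p l : g l u p = if l == v then 1 else if l == u then Hmodel p else 0.
Proof. rewrite /gmodel /Hmodel; index_cases. Qed.

Lemma gmodelE i j : g i j =
  if (i == j) && (i == xn) then expR \o (-2 *: Fh)
  else if (i == j) && (i == u) then Hmodel
  else cst (if ((i == v) && (j == u)) || ((i == u) && (j == v)) || ((i == j) && (0 < i < n)%N)
            then 1 else 0).
Proof. apply/funext => p; rewrite /gmodel /Hmodel; index_cases. Qed.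

Lemma differentiable_Fhat p : U p -> differentiable Fh p.
Proof. by move=> Up; exact: (smoothF [::]). Qed.

Lemma differentiable_Hmodel p : U p -> differentiable Hmodel p.
Proof.
move=> Up.
have -> : Hmodel = (fun q : V => a (q 0 u)) *
    \sum_(k < n.+2) (fun q : V => if (0 < k < n)%N then q 0 k * q 0 k else 0).
  apply/funext => q; rewrite /Hmodel fct_sumE /= big_mkcond /=.
  by congr (_ * _); apply: eq_bigr => k _; case: ifP.
apply: differentiableM; first exact: (smootha [::]).
apply: differentiable_sum => k; case: (0 < k < n)%N; last exact: differentiable_cst.
by apply: (@differentiableM _ _ (fun q : V => q 0 k)); exact: differentiable_coord.
Qed.

Lemma differentiable_gmodel i j p : U p -> differentiable (g i j) p.
Proof.
move=> Up; rewrite gmodelE; case: ifP => _.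
  apply: differentiable_comp => //; first exact/differentiableZ/differentiable_Fhat.
  exact/derivable1_diffP.
case: ifP => _; [exact: differentiable_Hmodel|exact: differentiable_cst].
Qed.

Lemma partial_Fhat_eq0 k p : k != xn -> k != u -> partial k Fh p = 0.
Proof.
move=> kxn ku; apply: partial_eq0 => h; rewrite /Fhat !mxE /=.
by rewrite ![_ == k]eq_sym (negbTE kxn) (negbTE ku) !mulr0 !add0r.
Qed.

Lemma partial_Fhat_v p : partial v Fh p = 0.
Proof. by rewrite partial_Fhat_eq0 ?index_eqF. Qed.

Lemma partial_Fhat_flat b p : (0 < b < n)%N -> partial b Fh p = 0.
Proof. by move=> bf; rewrite partial_Fhat_eq0 ?(flat_eqF bf). Qed.

Lemma partial_Fhat_x1 p : partial x1 Fh p = 0.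
Proof. exact: partial_Fhat_flat x1_flat. Qed.

Lemma partial_Hmodel_eq0 k p : (k == v) || (k == xn) -> partial k Hmodel p = 0.
Proof.
move=> kvxn; apply: partial_eq0 => h; rewrite /Hmodel !mxE /=.
have /negbTE -> : u != k by move: kvxn; rewrite !ord_eqE val_xn /=; lia.
rewrite mulr0 add0r; congr (_ * _); apply: eq_bigr => i /andP[i0 ilt].
rewrite !mxE /=.
have /negbTE -> : i != k by move: kvxn; rewrite !ord_eqE val_xn /=; lia.
by rewrite mulr0 add0r.
Qed.

Lemma partial_Hmodel_v p : partial v Hmodel p = 0.
Proof. by rewrite partial_Hmodel_eq0 ?eqxx. Qed.

Lemma partial_Hmodel_xn p : partial xn Hmodel p = 0.
Proof. by rewrite partial_Hmodel_eq0 ?eqxx ?orbT. Qed.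

Lemma partial_gmodel k i j p : U p -> partial k (g i j) p =
  if (i == j) && (i == xn) then -2 * partial k Fh p * expR (-2 * Fh p)
  else if (i == j) && (i == u) then partial k Hmodel p else 0.
Proof.
move=> Up; rewrite gmodelE; case: ifP => _.
  rewrite partial_expR; last exact/differentiableZ/differentiable_Fhat.
  by rewrite partialZ 1?mulrC //; exact: differentiable_Fhat.
by case: ifP => _ //; exact: partial_cst.
Qed.

Lemma model_koszul p : U p -> forall k i j,
  \sum_(l < n.+2) Gam l k i p * g l j p = koszul_form g (omodel F) k i j p.
Proof.
move=> Up; apply: weyl_koszul; [exact: weylG.1|by move=> i j; exact: gmodel_sym|exact: weylG.2].
Qed.

Lemma christoffel_col l j c k i p : U p ->
  (forall l', g l' j p = if l' == l then c else 0) ->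
  Gam l k i p * c = koszul_form g (omodel F) k i j p.
Proof.
move=> Up gj; rewrite -model_koszul //.
by under eq_bigr do rewrite gj; rewrite sum_mul_ifeq.
Qed.

Lemma christoffel_col_u k i p : U p ->
  Gam v k i p + Gam u k i p * Hmodel p = koszul_form g (omodel F) k i u p.
Proof.
move=> Up; rewrite -model_koszul //; under eq_bigr do rewrite gmodel_col_u.
rewrite (bigD1 v) //= (bigD1 u) //= eqxx mulr1.
rewrite big1 ?addr0 // => l /andP [/negbTE -> /negbTE ->]; exact: mulr0.
Qed.

Ltac koszul_expand :=
  rewrite /koszul_form !partial_gmodel // /omodel
    ?gmodel_col_x1 ?gmodel_col_v ?gmodel_col_xn ?gmodel_col_u.

Ltac index_simpl :=
  rewrite ?index_eqF ?x1_eqF ?eqxx /= ?andbF ?andFb ?andbT ?orbF ?orFb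
    ?partial_Fhat_v ?partial_Fhat_x1 ?partial_Hmodel_v ?partial_Hmodel_xn.

Ltac flat_simpl bf := rewrite ?(gmodel_col_flat bf) ?(flat_eqF bf) ?(partial_Fhat_flat _ bf).

Ltac koszul_cases_with m simp :=
  case: (index_kinds m) => [->|->|->|];
  [idtac|idtac|idtac|let mf := fresh in move=> mf; flat_simpl mf];
  simp; index_simpl; repeat (case: ifP => _); by field.

Ltac koszul_cases m := koszul_cases_with m idtac.

Lemma christoffel_x1_x1 m p : U p -> Gam x1 m x1 p = if m == u then partial u Fh p else 0.
Proof.
move=> Up; rewrite -[LHS]mulr1 (christoffel_col _ _ Up (gmodel_col_x1 p)).
koszul_expand; koszul_cases m.
Qed.

Lemma christoffel_x1_v m p : U p -> Gam x1 m v p = 0.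
Proof.
move=> Up; rewrite -[LHS]mulr1 (christoffel_col _ _ Up (gmodel_col_x1 p)).
koszul_expand; koszul_cases m.
Qed.

Lemma christoffel_u_u m p : U p -> Gam u m u p = if m == u then 2 * partial u Fh p else 0.
Proof.
move=> Up; rewrite -[LHS]mulr1 (christoffel_col _ _ Up (gmodel_col_v p)).
koszul_expand; koszul_cases m.
Qed.

Lemma christoffel_u_xn m p : U p -> Gam u m xn p = 0.
Proof.
move=> Up; rewrite -[LHS]mulr1 (christoffel_col _ _ Up (gmodel_col_v p)).
koszul_expand; koszul_cases m.
Qed.

Lemma christoffel_xn l m p : U p ->
  Gam l m xn p = if (l == xn) && (m == xn) then - partial xn Fh p else 0.
Proof.
move=> Up; case: (index_kinds l) => [->|->|->|lf].
- have := christoffel_col_u m xn Up.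
  rewrite christoffel_u_xn // mul0r addr0 => ->; koszul_expand; koszul_cases m.
- by rewrite christoffel_u_xn // index_eqF.
- have e0 : expR (-2 * Fh p) != 0 by rewrite gt_eqF // expR_gt0.
  apply: (mulIf e0); rewrite (christoffel_col _ _ Up (gmodel_col_xn p)).
  koszul_expand; koszul_cases m.
- rewrite -[LHS]mulr1 (christoffel_col _ _ Up (gmodel_col_flat lf p)).
  koszul_expand; koszul_cases_with m ltac:(flat_simpl lf).
Qed.

Lemma christoffel_x1 l m p : U p -> l != x1 -> l != v -> Gam l m x1 p = 0.
Proof.
move=> Up lx1 lv; case: (index_kinds l) => [lE|->|->|lf].
- by rewrite lE eqxx in lv.
- rewrite -[LHS]mulr1 (christoffel_col _ _ Up (gmodel_col_v p)).
  koszul_expand; koszul_cases m.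
- have e0 : expR (-2 * Fh p) != 0 by rewrite gt_eqF // expR_gt0.
  apply: (mulIf e0); rewrite mul0r (christoffel_col _ _ Up (gmodel_col_xn p)).
  koszul_expand; koszul_cases m.
- rewrite -[LHS]mulr1 (christoffel_col _ _ Up (gmodel_col_flat lf p)).
  have /negbTE x1l : x1 != l by rewrite eq_sym.
  koszul_expand; koszul_cases_with m ltac:(flat_simpl lf; rewrite ?x1l ?(negbTE lx1)).
Qed.

Lemma christoffel_sym l i j p : U p -> Gam l i j p = Gam l j i p.
Proof. by move=> Up; exact: weylG.1. Qed.

Lemma christoffel_xn_l l m p : U p ->
  Gam l xn m p = if (l == xn) && (m == xn) then - partial xn Fh p else 0.
Proof. by move=> Up; rewrite christoffel_sym // christoffel_xn. Qed.

Lemma christoffel_x1_xn_eq0 m p : U p -> Gam x1 xn m p = 0.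
Proof. by move=> Up; rewrite christoffel_xn_l // x1_eqF. Qed.

Lemma christoffel_xn_x1_eq0 l p : U p -> Gam l xn x1 p = 0.
Proof. by move=> Up; rewrite christoffel_xn_l // x1_eqF andbF. Qed.

Lemma curv_Q p : U p -> Curv Gam x1 xn u x1 p = Q p.
Proof.
move=> Up; rewrite /Curv.
rewrite (partial_eq_on openU (f := Gam x1 u x1) (g := Fu)) //; last first.
  by move=> q Uq; rewrite christoffel_x1_x1 // eqxx.
rewrite (partial_eq0_on openU (f := Gam x1 xn x1)) //; last first.
  by move=> q Uq; rewrite christoffel_xn_l // x1_eqF.
rewrite big1 ?addr0 ?subr0 // => r _.
by rewrite !christoffel_xn_l // x1_eqF andbF mul0r mulr0 subrr.
Qed.

Lemma curv_xn_u_x1 l p : U p -> Curv Gam l xn u x1 p = partial xn (Gam l u x1) p.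
Proof.
move=> Up; rewrite /Curv (partial_eq0_on openU (f := Gam l xn x1)) //; last first.
  by move=> q Uq; exact: christoffel_xn_x1_eq0.
rewrite big1 ?addr0 ?subr0 // => r _.
rewrite christoffel_xn_x1_eq0 // mulr0 subr0 christoffel_xn_l //.
case: ifP => [/andP [_ /eqP ->]|_]; last by rewrite mul0r.
by rewrite christoffel_x1 ?mulr0 // ?x1_eqF ?index_eqF.
Qed.

Lemma curv_x1_xn_x1 l p : U p -> Curv Gam x1 xn l x1 p = if l == u then Q p else 0.
Proof.
move=> Up; rewrite /Curv (partial_eq0_on openU (f := Gam x1 xn x1)) //; last first.
  by move=> q Uq; exact: christoffel_x1_xn_eq0.
rewrite big1 ?addr0 ?subr0 //; last first.
  by move=> r _; rewrite christoffel_x1_xn_eq0 // christoffel_xn_x1_eq0 // mul0r mulr0 subrr.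
case: ifP => [/eqP ->|lu].
  by apply: (partial_eq_on openU) => // q Uq; rewrite christoffel_x1_x1 // eqxx.
by apply: (partial_eq0_on openU) => // q Uq; rewrite christoffel_x1_x1 // lu.
Qed.

Lemma curv_x1_xn_u l p : U p -> Curv Gam x1 xn u l p = partial xn (Gam x1 u l) p.
Proof.
move=> Up; rewrite /Curv (partial_eq0_on openU (f := Gam x1 xn l)) //; last first.
  by move=> q Uq; exact: christoffel_x1_xn_eq0.
rewrite big1 ?addr0 ?subr0 // => r _.
rewrite christoffel_x1_xn_eq0 // mul0r sub0r christoffel_xn_l //.
case: ifP => [/andP [/eqP -> _]|_]; last by rewrite mulr0 oppr0.
by rewrite christoffel_xn // x1_eqF mul0r oppr0.
Qed.

Lemma nablaCurv_Q m p : U p ->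
  nablaCurv Gam m x1 xn u x1 p =
  partial m Q p + (if m == xn then partial xn Fh p else 0) * Q p
  - (if m == u then 2 * Fu p else 0) * Q p.
Proof.
move=> Up; rewrite /nablaCurv (partial_eq_on openU (g := Q)) //; last first.
  by move=> q Uq; exact: curv_Q.
have Gam_x1_u_x1 q : U q -> Gam x1 u x1 q = Fu q.
  by move=> Uq; rewrite christoffel_x1_x1 // eqxx.
have T1 : \sum_(q < n.+2) Gam x1 m q p * Curv Gam q xn u x1 p =
    (if m == u then Fu p else 0) * Q p.
  rewrite (bigD1 x1) //= curv_xn_u_x1 // (partial_eq_on openU (g := Fu)) //.
  rewrite christoffel_x1_x1 // big1 ?addr0 // => q qx1.
  rewrite curv_xn_u_x1 //; have [->|qv] := eqVneq q v.
    by rewrite christoffel_x1_v // mul0r.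
  by rewrite (partial_eq0_on openU (f := Gam q u x1)) ?mulr0 // => z Uz; rewrite christoffel_x1.
have T2 : \sum_(q < n.+2) Gam q m xn p * Curv Gam x1 q u x1 p =
    (if m == xn then - partial xn Fh p else 0) * Q p.
  rewrite (bigD1 xn) //= big1 ?addr0; first by rewrite christoffel_xn // eqxx /= curv_Q.
  by move=> q qxn; rewrite christoffel_xn // (negbTE qxn) mul0r.
have T3 : \sum_(q < n.+2) Gam q m u p * Curv Gam x1 xn q x1 p =
    (if m == u then 2 * Fu p else 0) * Q p.
  by under eq_bigr do rewrite curv_x1_xn_x1 //; rewrite sum_mul_ifeq christoffel_u_u.
have T4 : \sum_(q < n.+2) Gam q m x1 p * Curv Gam x1 xn u q p =
    (if m == u then Fu p else 0) * Q p.
  rewrite (bigD1 x1) //= curv_x1_xn_u // (partial_eq_on openU (g := Fu)) //.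
  rewrite christoffel_x1_x1 // big1 ?addr0 // => q qx1.
  rewrite curv_x1_xn_u //; have [->|qv] := eqVneq q v.
    rewrite (partial_eq0_on openU (f := Gam x1 u v)) ?mulr0 // => z Uz.
    exact: christoffel_x1_v.
  by rewrite christoffel_x1 // mul0r.
rewrite !big_split /= !sumrN T1 T2 T3 T4.
case: (m == u); case: (m == xn);
  by move: (partial m Q p) (Q p) (Fu p) (partial xn Fh p) => A B C D; ring.
Qed.

Definition phi : V -> R := expR \o (2/3 *: Fh + 1/3 *: (@ln R \o (Q * Q))).

Lemma QQ_gt0 p : U p -> 0 < (Q * Q) p.
Proof. by move=> Up; rewrite lt_def mulf_neq0 ?Q_neq0 //= -expr2 sqr_ge0. Qed.

Lemma phi_gt0 p : 0 < phi p.
Proof. exact: expR_gt0. Qed.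

Lemma smooth_phi : smooth_on U phi.
Proof.
apply/smooth_onP => k; have sF := (smooth_onP _ Fh).1 smoothF.
have sQ : differentiable_upto U k Q.
  exact/differentiable_upto_partial/differentiable_upto_partial/sF.
apply/(differentiable_upto_expR openU)/(differentiable_uptoD openU).
  exact: (differentiable_uptoZ openU).
apply/(differentiable_uptoZ openU)/(differentiable_upto_ln openU); first exact: QQ_gt0.
exact: (differentiable_uptoM openU).
Qed.

Lemma differentiable_phi p : U p -> differentiable phi p.
Proof. exact: differentiable_upto_diff ((smooth_onP _ _).1 smooth_phi 0). Qed.

Lemma partial_phi k p : U p ->
  partial k phi p = phi p * (2/3 * partial k Fh p + 2/3 * partial k Q p / Q p).
Proof.
move=> Up; have dF := differentiable_Fhat Up.
have dQ : differentiable Q p := smoothF [:: xn; u] Up.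
have dQQ : differentiable (Q * Q) p := differentiableM dQ dQ.
have dlnQQ : differentiable (@ln R \o (Q * Q)) p.
  apply: differentiable_comp => //; apply/derivable1_diffP.
  by apply: ex_derive; exact: is_derive1_ln (QQ_gt0 Up).
rewrite partial_expR; last by apply: differentiableD; exact: differentiableZ.
rewrite partialD ?partialZ //; try exact: differentiableZ.
rewrite partial_ln ?QQ_gt0 // partialM //; congr (_ * _).
rewrite (_ : (Q * Q) p = Q p * Q p) //; have := Q_neq0 Up.
by move: (Q p) (partial k Q p) (partial k Fh p) => q dq dFk q0; field.
Qed.

Lemma nablaCurv_Q_phi m p : U p ->
  nablaCurv Gam m x1 xn u x1 p =
  - 3 * omega_conf (omodel F) phi m p * Curv Gam x1 xn u x1 p.
Proof.
move=> Up; rewrite nablaCurv_Q // curv_Q // /omega_conf partial_phi // /omodel.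
have Q0 := Q_neq0 Up; have phi0 : phi p != 0 by rewrite gt_eqF ?phi_gt0.
have Fm : partial m Fh p = (if m == xn then partial xn Fh p else 0) + (if m == u then Fu p else 0).
  case: eqP => [->|/eqP mxn]; first by rewrite index_eqF addr0.
  by case: eqP => [->|/eqP mu]; rewrite ?add0r // partial_Fhat_eq0.
rewrite Fm; case: (m == xn); case: (m == u);
  move: (partial m Q p) (Q p) (phi p) (partial xn Fh p) (Fu p) Q0 phi0;
  by move=> A B C D E B0 C0; field; rewrite B0 C0.
Qed.

Lemma special_conf_phi : special_conf U Gam g phi.
Proof.
have [theta recG'] := recG.
exists (omega_conf (omodel F) phi); split.
  move=> p Up k i j; apply: nabla2_conf; first exact: weylG.2.
  - exact: differentiable_phi.
  - exact: differentiable_gmodel.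
  - by rewrite gt_eqF ?phi_gt0.
move=> p Up m l i j k; rewrite recG' //; congr (_ * _).
apply: (mulIf (Q_neq0 Up)); rewrite -curv_Q // -recG' //; exact: nablaCurv_Q_phi.
Qed.

Lemma special_conf_homothetic psi : connected U -> U !=set0 ->
  smooth_on U psi -> (forall p, U p -> 0 < psi p) -> special_conf U Gam g psi ->
  exists2 c : R, 0 < c & forall p, U p -> psi p = c * phi p.
Proof.
move=> connU [p0 Up0] spsi psi_gt0 [om [nabla2_psi nablaCurv_psi]].
have dpsi q : U q -> differentiable psi q.
  exact: differentiable_upto_diff ((smooth_onP _ _).1 spsi 0).
have psi0 q : U q -> psi q != 0 by move=> Uq; rewrite gt_eqF ?psi_gt0.
have phi0 q : phi q != 0 by rewrite gt_eqF ?phi_gt0.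
have om_psi q k : U q -> om k q = omega_conf (omodel F) psi k q.
  move=> Uq; have := nabla2_psi q Uq k v u.
  rewrite (nabla2_conf k (weylG.2 q Uq) (dpsi q Uq) (differentiable_gmodel v u Uq))
    ?psi0 //.
  rewrite /conf gmodel_col_u eqxx mulr1 => E.
  by apply: (mulIf (psi0 q Uq)); apply: (@mulfI _ (-2)) => //; rewrite !mulrA E.
have om_phi q k : U q -> om k q = omega_conf (omodel F) phi k q.
  move=> Uq; apply: (@mulfI _ (-3)) => //; apply: (mulIf (Q_neq0 Uq)).
  by rewrite -curv_Q // -nablaCurv_Q_phi // nablaCurv_psi.
have ratio_cst q : U q -> psi q / phi q = psi p0 / phi p0.
  move=> Uq; apply: (partial0_is_cst openU connU (f := fun q => psi q / phi q) _ _ Up0 Uq).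
    move=> z Uz; apply: differentiableM; first exact: dpsi.
    by apply: differentiableV; [exact: differentiable_phi|exact: phi0].
  move=> j z Uz; apply: partial_ratio_eq0; [exact: dpsi|exact: differentiable_phi|exact: psi0|exact: phi0|].
  have twice (x y : R) : y != 0 -> x / y = 2 * (x / (2 * y)) by move=> y0; field.
  have := om_psi z j Uz; rewrite om_phi // /omega_conf => /addrI /oppr_inj E.
  by rewrite (twice _ _ (psi0 z Uz)) (twice _ _ (phi0 z)) E.
exists (psi p0 / phi p0); first by rewrite divr_gt0 ?psi_gt0 ?phi_gt0.
by move=> p Up; rewrite -(ratio_cst p Up) mulfVK.
Qed.

End Model.

Theorem mainTheorem14 (R : realType) (n : nat)
  (U : set 'rV[R]_(n.+2)) (F : R -> R -> R) (a : R -> R)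
  (Gam : 'I_(n.+2) -> 'I_(n.+2) -> 'I_(n.+2) -> 'rV[R]_(n.+2) -> R) :
  (2 <= n)%N ->
  open U -> connected U -> U !=set0 ->
  smooth_on U (Fhat F) ->
  smooth_on U (fun p => a (p 0 (u_idx n))) ->
  (forall p, U p ->
     partial (u_idx n) (partial (u_idx n) (Fhat F)) p
     - (partial (u_idx n) (Fhat F) p) ^+ 2 = - a (p 0 (u_idx n))) ->
  (forall p, U p ->
     partial (xn_idx n) (partial (u_idx n) (Fhat F)) p != 0) ->
  weyl_on U Gam (gmodel F a) (omodel F) ->
  recurrent_on U Gam ->
  exists phi : 'rV[R]_(n.+2) -> R,
    [/\ smooth_on U phi, (forall p, U p -> 0 < phi p),
        special_conf U Gam (gmodel F a) phi &
        (forall psi : 'rV[R]_(n.+2) -> R,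
            smooth_on U psi -> (forall p, U p -> 0 < psi p) ->
            special_conf U Gam (gmodel F a) psi ->
            exists2 c : R, 0 < c & forall p, U p -> psi p = c * phi p)].
Proof.
move=> n_ge2 openU connU U0 smoothF smootha _ Q_neq0 weylG recG.
exists (phi F); split.
- exact: smooth_phi.
- by move=> p _; exact: phi_gt0.
- exact: special_conf_phi.
- by move=> psi; exact: special_conf_homothetic.
Qed.
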